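(* Let $\mathbb{F}$ be a field, $n,m\ge 1$, and $B'_1,\dots,B'_n\in\mathrm{M}(n\times m,\mathbb{F})$. For $v\in\mathbb{F}^m$ let its right degree be the rank of the $n\times n$ matrix $[B'_1v,\dots,B'_nv]$. Let $\mathcal{A}\le\Lambda(n+m,\mathbb{F})$ be spanned by: $A_i=\begin{bmatrix}0&B'_i\\-B'^t_i&0\end{bmatrix}$ for $i\in[n]$; $C_{i,j}=e_ie_j^t-e_je_i^t$ for $1\le i<j\le n$; and $D_{k,\ell}=e_{n+k}e_{n+\ell}^t-e_{n+\ell}e_{n+k}^t$ for $1\le k<\ell\le m$ (here $e_1,\dots,e_{n+m}$ is the standard basis of $\mathbb{F}^{n+m}$). Then there exists a nonzero $v\in\mathbb{F}^m$ of right degree $<n$ if and only if $\mathcal{A}$ has an isotropic space of dimension $2$.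
   Context: $\Lambda(N,\mathbb{F})$ is the space of $N\times N$ alternating matrices. A subspace $U$ is an isotropic space of $\mathcal{A}$ if $u^tAu'=0$ for all $u,u'\in U$, $A\in\mathcal{A}$. *)

From HB Require Import structures.
From mathcomp Require Import all_boot all_order all_algebra.
Set Implicit Arguments. Unset Strict Implicit. Unset Printing Implicit Defensive.
Import GRing.Theory.
Local Open Scope ring_scope.

Section Defs.
Variables (F : fieldType) (n m : nat).

Definition right_degree (B : 'I_n -> 'M[F]_(n, m)) (v : 'cV[F]_m) : nat :=
  \rank (\matrix_(r < n, c < n) (B c *m v) r 0).

Definition genA (B : 'I_n -> 'M[F]_(n, m)) (i : 'I_n) : 'M[F]_(n + m) :=
  block_mx 0 (B i) (- (B i)^T) 0.

Definition genC (i j : 'I_n) : 'M[F]_(n + m) :=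
  delta_mx (lshift m i) (lshift m j) - delta_mx (lshift m j) (lshift m i).

Definition genD (k l : 'I_m) : 'M[F]_(n + m) :=
  delta_mx (rshift n k) (rshift n l) - delta_mx (rshift n l) (rshift n k).

Definition gens (B : 'I_n -> 'M[F]_(n, m)) : seq 'M[F]_(n + m) :=
  [seq genA B i | i <- enum 'I_n]
  ++ [seq genC p.1 p.2 | p <- enum [pred p : 'I_n * 'I_n | (p.1 < p.2)%N]]
  ++ [seq genD p.1 p.2 | p <- enum [pred p : 'I_m * 'I_m | (p.1 < p.2)%N]].

Definition Aspace (B : 'I_n -> 'M[F]_(n, m)) : {vspace 'M[F]_(n + m)} :=
  <<gens B>>%VS.

End Defs.

Definition isotropic (F : fieldType) (N : nat)
    (S : {vspace 'M[F]_N}) (U : {vspace 'cV[F]_N}) : Prop :=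
  forall u u' A, u \in U -> u' \in U -> A \in S -> u^T *m A *m u' = 0.

From HB Require Import structures.
From mathcomp Require Import all_boot all_order all_algebra.
From mathcomp Require Import ring.
Set Implicit Arguments. Unset Strict Implicit. Unset Printing Implicit Defensive.
Import GRing.Theory.
Local Open Scope ring_scope.

(* On a pair u = (x1, y1), u' = (x2, y2) the generators of the
   matrix space A evaluate to
     A_c     : x1^T B_c y2 - x2^T B_c y1,
     C_(i,j) : the 2x2 minor x1_i x2_j - x1_j x2_i,
     D_(k,l) : the 2x2 minor y1_k y2_l - y1_l y2_k,
   so (u, u') is isotropic iff x1, x2 are collinear, y1, y2 are collinear and
   the A_c-forms are symmetric (lemma [gens_form0P]).  Moreover right_degree v
   < n iff some x <> 0 satisfies x^T B_c v = 0 for all c ([right_degree_ltP]).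
   Forward direction: (x, 0) and (0, v) span a 2-dimensional isotropic space.
   Backward direction: take a basis (u1, u2) of the isotropic plane; by
   collinearity u1 = (a x, c y), u2 = (b x, d y), linear independence forces
   ad - bc <> 0, x <> 0, y <> 0 ([free_combination_det]), and the A_c
   condition becomes (ad - bc) x^T B_c y = 0, so y has right degree < n. *)

Section BilinearForms.
Variable F : fieldType.

Lemma mx11_eq0 (M : 'M[F]_1) : M = 0 <-> M 0 0 = 0.
Proof.
split=> [->|M00]; first by rewrite mxE.
by apply/matrixP=> i j; rewrite !ord1 M00 mxE.
Qed.

Lemma trmx11 (M : 'M[F]_1) : M^T = M.
Proof. by rewrite [M]mx11_scalar tr_scalar_mx. Qed.

Lemma form_delta N (u w : 'cV[F]_N) a b :
  (u^T *m delta_mx a b *m w) 0 0 = u a 0 * w b 0.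
Proof.
rewrite mxE (bigD1 b) //= big1 => [|k /negbTE nkb]; last first.
  by rewrite mxE big1 ?mul0r // => l _; rewrite !mxE nkb andbF mulr0.
rewrite addr0 mxE (bigD1 a) //= big1 => [|l /negbTE nla]; last first.
  by rewrite !mxE nla mulr0.
by rewrite !mxE !eqxx mulr1 addr0.
Qed.

Lemma form_span N (X : seq 'M[F]_N) (u w : 'cV[F]_N) :
  (forall g, g \in X -> u^T *m g *m w = 0) ->
  forall A, A \in <<X>>%VS -> u^T *m A *m w = 0.
Proof.
move=> X0 A /(@coord_span _ _ _ (in_tuple X)) ->.
rewrite mulmx_sumr mulmx_suml big1 // => i _.
by rewrite -scalemxAr -scalemxAl X0 ?scaler0 // mem_nth.
Qed.

Lemma formZZ p q (x : 'cV[F]_p) (M : 'M[F]_(p, q)) (y : 'cV[F]_q) a d :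
  (a *: x)^T *m M *m (d *: y) = (a * d) *: (x^T *m M *m y).
Proof.
have -> : (a *: x)^T = a *: x^T by apply/matrixP => i j; rewrite !mxE.
by rewrite -scalemxAr -!scalemxAl scalerA mulrC.
Qed.

Lemma form_genA n m (x1 x2 : 'cV[F]_n) (y1 y2 : 'cV[F]_m) M :
  (col_mx x1 y1)^T *m block_mx 0 M (- M^T) 0 *m col_mx x2 y2
  = x1^T *m M *m y2 - x2^T *m M *m y1.
Proof.
rewrite tr_col_mx mul_row_block mul_row_col !mulmx0 add0r addr0 addrC.
congr (_ + _); rewrite mulmxN mulNmx; congr (- _).
by rewrite -[RHS]trmx11 !trmx_mul trmxK mulmxA.
Qed.

Lemma form_genC n m (x1 x2 : 'cV[F]_n) (y1 y2 : 'cV[F]_m) i j :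
  ((col_mx x1 y1)^T *m genC F m i j *m col_mx x2 y2) 0 0 =
  x1 i 0 * x2 j 0 - x1 j 0 * x2 i 0.
Proof. by rewrite /genC mulmxBr mulmxBl mxE [X in _ + X]mxE !form_delta !col_mxEu. Qed.

Lemma form_genD n m (x1 x2 : 'cV[F]_n) (y1 y2 : 'cV[F]_m) k l :
  ((col_mx x1 y1)^T *m genD F n k l *m col_mx x2 y2) 0 0 =
  y1 k 0 * y2 l 0 - y1 l 0 * y2 k 0.
Proof. by rewrite /genD mulmxBr mulmxBl mxE [X in _ + X]mxE !form_delta !col_mxEd. Qed.

End BilinearForms.

Section Collinearity.
Variable F : fieldType.

Definition collinear k (p q : 'cV[F]_k) : Prop :=
  forall i j, p i 0 * q j 0 = p j 0 * q i 0.

Lemma collinear_lt k (p q : 'cV[F]_k) :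
  (forall i j : 'I_k, (i < j)%N -> p i 0 * q j 0 = p j 0 * q i 0) ->
  collinear p q.
Proof.
move=> pq i j; case: (ltngtP i j) => [/pq //|/pq -> //|/val_inj -> //].
Qed.

Lemma collinearZ k (r : 'cV[F]_k) a b : collinear (a *: r) (b *: r).
Proof. by move=> i j; rewrite !mxE; ring. Qed.

Lemma collinearP k (p q : 'cV[F]_k) :
  collinear p q -> exists r a b, p = a *: r /\ q = b *: r.
Proof.
move=> pq; have [->|] := eqVneq p 0.
  by exists q, 0, 1; rewrite scale0r scale1r.
case/matrix0Pn => i [j]; rewrite (ord1 j) => pi0.
exists p, 1, (q i 0 / p i 0); rewrite scale1r; split=> //.
apply/matrixP => l z; rewrite (ord1 z) !mxE.
by apply: (mulIf pi0); rewrite mulrAC divfK // mulrC pq mulrC.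
Qed.

End Collinearity.

Section LinearIndependence.
Variables (F : fieldType) (V : vectType F).

Lemma free2P (u1 u2 : V) : free [:: u1; u2] ->
  forall s t, s *: u1 + t *: u2 = 0 -> s = 0 /\ t = 0.
Proof.
rewrite free_cons seq1_free span_seq1 => /andP [u1_out u2_nz] s t rel.
have [s0|s_nz] := eqVneq s 0.
  move: rel; rewrite s0 scale0r add0r => /eqP.
  by rewrite scaler_eq0 (negbTE u2_nz) orbF => /eqP.
case/negP: u1_out; apply/vlineP; exists (- t / s).
move/eqP: rel; rewrite addr_eq0 => /eqP rel.
by rewrite -[u1]scale1r -(mulVf s_nz) -scalerA rel -scaleNr scalerA mulrC.
Qed.

Lemma free_combination_det (p q : V) a b c d :
  free [:: a *: p + c *: q; b *: p + d *: q] ->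
  [/\ a * d - b * c != 0, p != 0 & q != 0].
Proof.
set u1 := a *: p + c *: q; set u2 := b *: p + d *: q => indep.
have rel0 := free2P indep.
have Ep : d *: u1 + (- c) *: u2 = (a * d - b * c) *: p.
  rewrite scaleNr !scalerDr !scalerA opprD addrACA [d * c]mulrC subrr addr0.
  by rewrite -scalerBl [d * a]mulrC [c * b]mulrC.
have Eq : (- b) *: u1 + a *: u2 = (a * d - b * c) *: q.
  rewrite scaleNr !scalerDr !scalerA opprD addrC addrACA [a * b]mulrC subrr.
  by rewrite add0r -scalerBl.
have opp0 (e : F) : - e = 0 -> e = 0 by move/eqP; rewrite oppr_eq0 => /eqP.
have det_nz : a * d - b * c != 0.
  apply/eqP => det0; move: Ep Eq; rewrite det0 !scale0r.
  move=> /rel0 [_ /opp0 c0] /rel0 [_ a0].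
  by move: (free_not0 indep (mem_head _ _)); rewrite /u1 a0 c0 !scale0r addr0 eqxx.
split=> //; apply/eqP => zero.
  move: Ep; rewrite zero scaler0 => /rel0 [d0 /opp0 c0].
  by move: det_nz; rewrite d0 c0 !mulr0 subrr eqxx.
move: Eq; rewrite zero scaler0 => /rel0 [/opp0 b0 a0].
by move: det_nz; rewrite a0 b0 !mul0r subrr eqxx.
Qed.

End LinearIndependence.

Section RightDegree.
Variable F : fieldType.

Lemma rank_lt_rowsP p q (M : 'M[F]_(p, q)) :
  reflect (exists2 z : 'rV_p, z != 0 & z *m M = 0) (\rank M < p)%N.
Proof.
rewrite ltnNge row_leq_rank -kermx_eq0.
apply: (iffP rowV0Pn) => [[z /sub_kermxP zM z_nz]|[z z_nz zM]].
  by exists z.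
by exists z => //; apply/sub_kermxP.
Qed.

Lemma right_degree_ltP n m (B : 'I_n -> 'M[F]_(n, m)) (v : 'cV[F]_m) :
  (right_degree B v < n)%N <->
  exists2 x : 'cV[F]_n, x != 0 & forall c, x^T *m B c *m v = 0.
Proof.
have entry (z : 'rV_n) c :
    (z *m \matrix_(r < n, c < n) (B c *m v) r 0) 0 c = (z *m B c *m v) 0 0.
  by rewrite -mulmxA !mxE; apply: eq_bigr => r _; rewrite !mxE.
split=> [/rank_lt_rowsP [z z_nz zM]|[x x_nz xB]].
  exists z^T; first by rewrite trmx_eq0.
  by move=> c; apply/mx11_eq0; rewrite trmxK -entry zM mxE.
apply/rank_lt_rowsP; exists x^T; first by rewrite trmx_eq0.
by apply/matrixP => i c; rewrite (ord1 i) entry xB !mxE.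
Qed.

End RightDegree.

Section Generators.
Variables (F : fieldType) (n m : nat) (B : 'I_n -> 'M[F]_(n, m)).

Lemma gens_form0P (x1 x2 : 'cV[F]_n) (y1 y2 : 'cV[F]_m) :
  (forall g, g \in gens B -> (col_mx x1 y1)^T *m g *m col_mx x2 y2 = 0) <->
  [/\ forall c, x1^T *m B c *m y2 = x2^T *m B c *m y1,
      collinear x1 x2 & collinear y1 y2].
Proof.
split=> [iso|[symA cx cy] g].
  split.
  - move=> c; apply/eqP; rewrite -subr_eq0 -form_genA; apply/eqP/iso.
    by rewrite /gens mem_cat (map_f (genA B)) ?mem_enum.
  - apply: collinear_lt => i j ij; apply/eqP; rewrite -subr_eq0 -(form_genC _ _ y1 y2).
    apply/eqP/mx11_eq0/iso; rewrite /gens !mem_cat orbC.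
    by rewrite (map_f (fun p : 'I_n * 'I_n => genC F m p.1 p.2) (x := (i, j)))
      ?orbT // mem_enum inE.
  - apply: collinear_lt => k l kl; apply/eqP; rewrite -subr_eq0 -(form_genD x1 x2).
    apply/eqP/mx11_eq0/iso; rewrite /gens !mem_cat orbC.
    by rewrite (map_f (fun p : 'I_m * 'I_m => genD F n p.1 p.2) (x := (k, l)))
      ?orbT // mem_enum inE.
rewrite /gens !mem_cat => /orP [|/orP []] /mapP [[i j] _ ->].
- by rewrite form_genA symA subrr.
- by apply/mx11_eq0; rewrite form_genC cx subrr.
- by apply/mx11_eq0; rewrite form_genD cy subrr.
Qed.

End Generators.

Section Planes.
Variable F : fieldType.

Lemma free_col_mx_pair n m (x : 'cV[F]_n) (v : 'cV[F]_m) :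
  x != 0 -> v != 0 -> free [:: col_mx x 0; col_mx 0 v].
Proof.
move=> x_nz v_nz; rewrite free_cons seq1_free span_seq1; apply/andP; split.
  apply/vlineP => -[k]; rewrite scale_col_mx scaler0 => /eq_col_mx [x0 _].
  by rewrite x0 eqxx in x_nz.
by apply: contraNneq v_nz; rewrite -col_mx0 => /eq_col_mx [_ ->].
Qed.

Lemma span_col_mx_pair n m (x : 'cV[F]_n) (v : 'cV[F]_m) u :
  u \in <<[:: col_mx x 0; col_mx 0 v]>>%VS ->
  exists s t, u = col_mx (s *: x) (t *: v).
Proof.
rewrite span_cons span_seq1 => /memv_addP [_ /vlineP [s ->] [_ /vlineP [t ->] ->]].
by exists s, t; rewrite !scale_col_mx !scaler0 add_col_mx addr0 add0r.
Qed.

Lemma col_mx_blocks n m (x : 'cV[F]_n) (y : 'cV[F]_m) a c :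
  col_mx (a *: x) (c *: y) = a *: col_mx x 0 + c *: col_mx 0 y.
Proof. by rewrite !scale_col_mx !scaler0 add_col_mx addr0 add0r. Qed.

Lemma dim2_free_pair N (U : {vspace 'cV[F]_N}) : \dim U = 2%N ->
  exists u1 u2, [/\ free [:: u1; u2], u1 \in U & u2 \in U].
Proof.
move=> dimU; have size2 : size (vbasis U) = 2%N by rewrite size_tuple.
have indep := basis_free (vbasisP U).
have inU v : v \in (vbasis U : seq _) -> v \in U by apply: vbasis_mem.
move: size2 indep inU; case: (tval (vbasis U)) => [|u1 [|u2 [|]]] // _ indep inU.
by exists u1, u2; rewrite !inU ?inE ?eqxx ?orbT.
Qed.

End Planes.

Theorem claim7p4 (F : fieldType) (n m : nat) (hn : (1 <= n)%N) (hm : (1 <= m)%N)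
    (B : 'I_n -> 'M[F]_(n, m)) :
  (exists v : 'cV[F]_m, v != 0 /\ (right_degree B v < n)%N) <->
  (exists U : {vspace 'cV[F]_(n + m)}, \dim U = 2%N /\ isotropic (Aspace B) U).
Proof.
split=> [[v [v_nz /right_degree_ltP [x x_nz xB]]]|[U [dimU iso]]].
  exists <<[:: col_mx x 0; col_mx 0 v]>>%VS.
  split; first exact/eqP/free_col_mx_pair.
  move=> u u' A /span_col_mx_pair [s [t ->]] /span_col_mx_pair [s' [t' ->]].
  move/form_span; apply; apply/gens_form0P; split; [|exact: collinearZ..].
  by move=> c; rewrite !formZZ !xB !scaler0.
have [u1 [u2 [indep u1U u2U]]] := dim2_free_pair dimU.
move: indep u1U u2U; rewrite -(vsubmxK u1) -(vsubmxK u2).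
move: (usubmx u1) (dsubmx u1) (usubmx u2) (dsubmx u2) => x1 y1 x2 y2 indep u1U u2U.
have [symA cx cy] := (@gens_form0P _ _ _ B x1 x2 y1 y2).1
  (fun g gB => iso _ _ _ u1U u2U (memv_span gB)).
have [x [a [b [Ex1 Ex2]]]] := collinearP cx.
have [y [c [d [Ey1 Ey2]]]] := collinearP cy.
move: indep symA; rewrite Ex1 Ex2 Ey1 Ey2 !col_mx_blocks.
move=> /free_combination_det [det_nz x0_nz y0_nz] symA.
exists y; split; first by apply: contraNneq y0_nz => ->; rewrite col_mx0.
apply/right_degree_ltP; exists x; first by apply: contraNneq x0_nz => ->; rewrite col_mx0.
move=> k; have : (a * d - b * c) *: (x^T *m B k *m y) == 0.
  by rewrite scalerBl -!formZZ symA subrr.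
by rewrite scaler_eq0 (negbTE det_nz) => /eqP.
Qed.
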